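(* Let $r\ge2$ be an integer. If a sequence of positive integers $A$ satisfies $A(n)\le\frac{r-1}{140}(\log_2 n)^2$ for all sufficiently large $n$, then $A$ is not $r$-Ramsey complete.
   Context: $A(n)=|A\cap[n]|$ is the number of terms of $A$ that are at most $n$. For a sequence $S$ of positive integers, $\Sigma(S)$ is the set of sums of distinct terms of $S$. A sequence $A$ is $r$-Ramsey complete if, whenever $A$ is partitioned into $r$ classes $A_1,\dots,A_r$, every sufficiently large positive integer lies in $\bigcup_{i}\Sigma(A_i)$. *)

From mathcomp Require Import all_boot.
From Stdlib Require Import Reals.

Set Implicit Arguments.
Unset Strict Implicit.
Unset Printing Implicit Defensive.

(* A sequence of positive integers is modelled as the set of its terms,
   a boolean predicate A : pred nat with all elements positive. *)
Definition pos_seq (A : pred nat) : Prop := forall a, A a -> 0 < a.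

Definition counting (A : pred nat) (n : nat) : nat := count A (iota 1 n).

Definition subset_sums (S : pred nat) (m : nat) : Prop :=
  exists s : seq nat, [/\ uniq s, all S s & sumn s = m].

(* A partition of A into r classes is given by a colouring c : nat -> 'I_r;
   class i is A_i = {a in A | c a = i}. *)
Definition color_class (A : pred nat) (r : nat) (c : nat -> 'I_r) (i : 'I_r)
  : pred nat := [pred a | A a && (c a == i)].

Definition ramsey_complete (r : nat) (A : pred nat) : Prop :=
  forall c : nat -> 'I_r, exists N : nat, forall m : nat, N <= m ->
    exists i : 'I_r, subset_sums (color_class A c i) m.

Definition log2 (x : R) : R := (ln x / ln 2)%R.

(* Colour the terms of A scale by scale.  A scale is a window (2^L, 2^H]
   followed by a top (2^H, 2^(H+u)], and each scale starts where the previous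
   one ends.  Window terms get k = r/2 colours and top terms the other
   q = r - k colours; in both cases the colour of a term is its rank in A
   modulo the number of colours, so each class takes about a 1/k (resp. 1/q)
   share of every interval.  All terms up to 2^L together with one window class
   sum to less than 2^(H+u-1).  A top class has few subset sums up to 2^(H+u)
   (Rankin's trick), so the top-coloured representations, each shifted by at
   most the sum of the terms up to 2^L, cover fewer than 2^(H+u-1) integers of
   (2^(H+u-1), 2^(H+u)].  The density bound A(n) <= (r-1)/140 (log2 n)^2,
   averaged over H, provides such H and u above every L. *)

From mathcomp Require Import all_boot all_order all_algebra zify.
From Stdlib Require Import Reals Lra.
From mathcomp Require Import ring lra.
(* Reals rebinds [^] on nat to [Nat.pow]; this restores [expn]. *)
Import ssrnat.
Import Order.TTheory GRing.Theory Num.Theory.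

Set Implicit Arguments.
Unset Strict Implicit.
Unset Printing Implicit Defensive.

(** * Subset sums *)

Fixpoint subsums (t : seq nat) : seq nat :=
  if t is a :: t' then subsums t' ++ map (addn a) (subsums t') else [:: 0].

Definition nsubsums_le (t : seq nat) (Y : nat) : nat :=
  count (fun x => x <= Y) (subsums t).

Lemma sumn_filter_subsums (P : pred nat) t : sumn (filter P t) \in subsums t.
Proof.
elim: t => [|a t IHt] /=; first by rewrite inE.
rewrite mem_cat; case: (P a) => /=; last by rewrite IHt.
by rewrite map_f ?orbT.
Qed.

Lemma perm_filter_subset (s t : seq nat) :
  uniq s -> uniq t -> {subset s <= t} -> perm_eq s (filter (mem s) t).
Proof.
move=> s_uniq t_uniq sub_st; apply: uniq_perm; rewrite ?filter_uniq // => x.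
rewrite mem_filter; apply/idP/andP => [xs|[]//]; split=> //; exact: sub_st.
Qed.

Lemma sumn_subset_subsums s t :
  uniq s -> uniq t -> {subset s <= t} -> sumn s \in subsums t.
Proof.
by move=> su tu st; rewrite (perm_sumn (perm_filter_subset su tu st)) sumn_filter_subsums.
Qed.

Lemma leq_mem_sumn a t : a \in t -> a <= sumn t.
Proof. by elim: t => [|b t IHt] //=; rewrite inE => /orP[/eqP->|/IHt]; lia. Qed.

Lemma leq_sumn_filter (P : pred nat) s : sumn (filter P s) <= sumn s.
Proof. by elim: s => [|a s IHs] //=; case: (P a) => /=; lia. Qed.

Lemma leq_sumn_subset s t :
  uniq s -> uniq t -> {subset s <= t} -> sumn s <= sumn t.
Proof.
by move=> su tu st; rewrite (perm_sumn (perm_filter_subset su tu st)) leq_sumn_filter.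
Qed.

Lemma sumn_filterC (P : pred nat) s :
  sumn s = sumn (filter P s) + sumn (filter (predC P) s).
Proof. by elim: s => [|a s IHs] //=; case: (P a) => /=; lia. Qed.

Lemma leq_sumn_filter_count (P : pred nat) s M :
  all (fun a => a <= M) s -> sumn (filter P s) <= count P s * M.
Proof. by elim: s => [|a s IHs] //= /andP[aM /IHs]; case: (P a) => /=; nia. Qed.

Lemma count_addn_le a t Y :
  count (fun x => x <= Y) (map (addn a) t) =
  if a <= Y then count (fun x => x <= Y - a) t else 0.
Proof.
rewrite count_map; case: ifP => aY; first by apply: eq_count => x /=; lia.
by apply/eqP; rewrite -leqn0 leqNgt -has_count; apply/hasP => -[x _ /=]; lia.
Qed.

(* Rankin's trick: a subset sum x <= Y is counted with weight 2^((Y - x) / D) >= 1. *)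
Lemma rankin_subsums D t Y :
  nsubsums_le t Y * \prod_(a <- t) 2 ^ (a %/ D)
  <= 2 ^ (Y %/ D) * \prod_(a <- t) (2 ^ (a %/ D)).+1.
Proof.
elim: t Y => [|a t IHt] Y.
  by rewrite /nsubsums_le !big_nil !muln1 /= expn_gt0.
rewrite /nsubsums_le /= count_cat count_addn_le !big_cons.
set P := \prod_(b <- t) 2 ^ (b %/ D); set P1 := \prod_(b <- t) (2 ^ _).+1.
have IHY := IHt Y; rewrite -/P -/P1 in IHY.
set E := 2 ^ (a %/ D); set X := 2 ^ (Y %/ D).
have -> : X * (E.+1 * P1) = E * (X * P1) + X * P1 by rewrite mulSn mulnDr addnC mulnCA.
rewrite mulnDl mulnCA leq_add ?leq_mul2l ?IHY ?orbT //.
case: ifP => aY; last by rewrite mul0n.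
have IHYa := IHt (Y - a); rewrite -/P -/P1 in IHYa.
have le_exp : 2 ^ ((Y - a) %/ D) * E <= X.
  rewrite -expnD leq_pexp2l //; case: D {IHt IHY IHYa P P1 E X} => [|D].
    by rewrite !divn0.
  by rewrite -{2}(subnK aY) divnD // leq_addr.
rewrite mulnCA (leq_trans (leq_mul (leqnn E) IHYa)) // mulnA.
by rewrite leq_mul2r (mulnC E) le_exp orbT.
Qed.

Lemma expn_succ_mul_sub N k : k <= N -> N.+1 ^ k * (N - k) <= N ^ k.+1.
Proof.
elim: k => [|k IHk] kN; first by rewrite expn0 mul1n subn0 expn1.
have step : N.+1 * (N - k.+1) <= N * (N - k) by nia.
rewrite expnS -mulnA mulnCA (leq_trans (leq_mul (leqnn _) step)) //.
by rewrite mulnCA [N ^ k.+2]expnS leq_mul2l IHk ?orbT // ltnW.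
Qed.

Lemma expn_succ_le_double N k : 2 * k <= N -> N.+1 ^ k <= 2 * N ^ k.
Proof.
move=> kN; have /expn_succ_mul_sub : k <= N by lia.
case: N kN => [|N] kN; first by have -> : k = 0 by lia.
by rewrite expnS; move: (N.+2 ^ k) (N.+1 ^ k) => X Y; nia.
Qed.

Lemma expn_succ_le_blocks N k n :
  0 < k -> 2 * k <= N -> N.+1 ^ n <= 2 ^ (n %/ k + 1) * N ^ n.
Proof.
move=> k_gt0 kN; elim/ltn_ind: n => n IHn.
case: (ltnP n k) => [nk|kn].
  by rewrite divn_small // expn_succ_le_double //; lia.
rewrite -(subnK kn) expnD [N ^ _]expnD.
have -> : (n - k + k) %/ k = (n - k) %/ k + 1 by rewrite divnDr ?divnn ?k_gt0.
by rewrite expnD expn1 mulnACA leq_mul ?expn_succ_le_double ?IHn //; lia.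
Qed.

Lemma prod_succ_le N s : (forall x, x \in s -> N <= x) ->
  \prod_(x <- s) x.+1 * N ^ size s <= N.+1 ^ size s * \prod_(x <- s) x.
Proof.
elim: s => [|x s IHs] hs; first by rewrite !big_nil.
rewrite !big_cons /= !expnS mulnACA [N.+1 * _ * _]mulnACA.
rewrite leq_mul ?IHs // => [|y ys]; last by rewrite hs // inE ys orbT.
by have := hs x (mem_head x s); nia.
Qed.

Lemma prod_succ_le_pow2 v s : (forall x, x \in s -> 2 ^ v.+1 <= x) ->
  \prod_(x <- s) x.+1 <= 2 ^ (size s %/ 2 ^ v + 1) * \prod_(x <- s) x.
Proof.
move=> hs; have Npos : 0 < (2 ^ v.+1) ^ size s by rewrite !expn_gt0.
rewrite -(leq_pmul2r Npos) (leq_trans (prod_succ_le hs)) // mulnAC leq_mul2r.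
by rewrite expn_succ_le_blocks ?expn_gt0 ?orbT // expnS.
Qed.

Lemma count_mod_iota q j s n :
  0 < q -> q * count (fun z => z %% q == j) (iota s n) <= n + 2 * q.
Proof.
move=> q_gt0; rewrite -size_filter; set S := filter _ _.
have div_inj : {in S &, injective (divn^~ q)}.
  move=> x y; rewrite !mem_filter => /andP[/eqP xj _] /andP[/eqP yj _] eq_div.
  by rewrite (divn_eq x q) (divn_eq y q) xj yj eq_div.
have div_sub : {subset map (divn^~ q) S <= iota (s %/ q) (n %/ q).+2}.
  move=> y /mapP[z]; rewrite mem_filter mem_iota => /andP[_ /andP[sz zn]] ->.
  rewrite mem_iota leq_div2r //= (leq_ltn_trans (leq_div2r q (ltnW zn))) //.
  by rewrite divnD // -addnA ltn_add2l -addn2 ltn_add2l ltnS leq_b1.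
have S_uniq : uniq S := filter_uniq _ (iota_uniq _ _).
have := uniq_leq_size (etrans (map_inj_in_uniq div_inj) S_uniq) div_sub.
rewrite size_map size_iota => hS.
rewrite (leq_trans (leq_mul (leqnn q) hS)) //; have := leq_divM n q; nia.
Qed.

Lemma sum_nat_range_double B n : (\sum_(B <= H < B + n) H).*2 + n = n * (B.*2 + n).
Proof.
elim: n => [|n IHn]; first by rewrite !addn0 big_geq.
by rewrite (addnS B n) big_nat_recr ?leq_addr //= doubleD; lia.
Qed.

Lemma sum_pow2_lt H : \sum_(l < H.+1) 2 ^ l < 2 ^ H.+1.
Proof.
elim: H => [|H IH]; first by rewrite big_ord1.
rewrite big_ord_recr /= [2 ^ H.+2]expnS.
by move: IH; move: (\sum_(_ < _) _) (2 ^ H.+1) => S X; lia.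
Qed.

(** * Ranks, residue classes and dyadic levels *)

Section Classes.

Variable A : pred nat.

Definition rank (a : nat) : nat := counting A a.

Definition in_class (q j : nat) : pred nat := fun a => A a && (rank a %% q == j).

Lemma rank_addn x n : rank (x + n) = rank x + count A (iota x.+1 n).
Proof. by rewrite /rank /counting iotaD count_cat add1n. Qed.

Lemma map_rank_iota x n :
  map rank (filter A (iota x.+1 n)) = iota (rank x).+1 (count A (iota x.+1 n)).
Proof.
elim: n => [|n IHn] //.
rewrite -[n.+1]addn1 !iotaD filter_cat map_cat IHn count_cat /=.
case Ax: (A _) => /=; last by rewrite !addn0 cats0.
rewrite addn0 iotaD /=; congr (_ ++ [:: _]).
by rewrite addSnnS rank_addn -[n.+1]addn1 iotaD count_cat /= Ax /=; lia.
Qed.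

Lemma count_class_iota q j x n : 0 < q ->
  q * count (in_class q j) (iota x.+1 n) <= count A (iota x.+1 n) + 2 * q.
Proof.
move=> q_gt0.
have -> : count (in_class q j) (iota x.+1 n) =
          count (fun z => z %% q == j) (map rank (filter A (iota x.+1 n))).
  by rewrite count_map count_filter; apply: eq_count => a; rewrite /in_class andbC.
by rewrite map_rank_iota count_mod_iota.
Qed.

Definition dyadic (l : nat) : seq nat := iota (2 ^ l).+1 (2 ^ l).

(* The l-th dyadic level is (2^(l-1), 2^l] for l > 0 and {1} for l = 0, so
   [dyadic l] is level l+1. *)
Definition level_size (l : nat) : nat :=
  if l is l'.+1 then count A (dyadic l') else counting A 1.

Lemma iota_pow2S l : iota 1 (2 ^ l.+1) = iota 1 (2 ^ l) ++ dyadic l.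
Proof. by rewrite expnS mul2n -addnn iotaD add1n. Qed.

Lemma counting_pow2S l : counting A (2 ^ l.+1) = counting A (2 ^ l) + level_size l.+1.
Proof. by rewrite /counting iota_pow2S count_cat. Qed.

Definition level_weight (H : nat) : nat := \sum_(l < H.+1) level_size l * 2 ^ l.

Lemma window_class_sum k i H : 0 < k ->
  k * sumn (filter (in_class k i) (iota 1 (2 ^ H))) <= level_weight H + 4 * k * 2 ^ H.
Proof.
move=> k_gt0.
suff : k * sumn (filter (in_class k i) (iota 1 (2 ^ H))) <=
       \sum_(l < H.+1) (level_size l + 2 * k) * 2 ^ l.
  rewrite (eq_bigr _ (fun l _ => mulnDl _ _ _)) big_split -big_distrr /= => le_sum.
  have geom := sum_pow2_lt H; rewrite expnS in geom.
  rewrite (leq_trans le_sum) // leq_add2l.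
  by move: (\sum_(l < H.+1) 2 ^ l) (2 ^ H) geom => S X geom; nia.
elim: H => [|H IH]; first by rewrite big_ord1 /=; case: (in_class k i 1) => /=; nia.
rewrite iota_pow2S filter_cat sumn_cat big_ord_recr /= mulnDr leq_add //.
have le_max : sumn (filter (in_class k i) (dyadic H))
              <= count (in_class k i) (dyadic H) * 2 ^ H.+1.
  by apply: leq_sumn_filter_count; apply/allP => a; rewrite mem_iota expnS; lia.
rewrite (leq_trans (leq_mul (leqnn k) le_max)) // mulnA leq_mul2r.
by rewrite count_class_iota ?orbT.
Qed.

Section TopClasses.

Variable q : nat.

Definition level_class (j l : nat) : seq nat := filter (in_class q j) (dyadic l).

Definition top_class (j H u : nat) : seq nat :=
  filter (in_class q j) (iota (2 ^ H).+1 (2 ^ (H + u) - 2 ^ H)).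

Definition top_excess (j H u : nat) : nat :=
  \sum_(t < u) (size (level_class j (H + t)) %/ 2 ^ t + 1).

Lemma size_level_class j l :
  0 < q -> q * size (level_class j l) <= level_size l.+1 + 2 * q.
Proof. by move=> q_gt0; rewrite size_filter count_class_iota. Qed.

Lemma mem_top_class j H u a :
  (a \in top_class j H u) = [&& 2 ^ H < a, a <= 2 ^ (H + u) & in_class q j a].
Proof.
have : 2 ^ H <= 2 ^ (H + u) by rewrite leq_pexp2l ?leq_addr.
by rewrite mem_filter mem_iota andbC; case: (in_class q j a); rewrite ?andbF //=; lia.
Qed.

Lemma top_class_uniq j H u : uniq (top_class j H u).
Proof. exact/filter_uniq/iota_uniq. Qed.

Lemma top_classS j H u :
  top_class j H u.+1 = top_class j H u ++ level_class j (H + u).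
Proof.
have le_pow : 2 ^ H <= 2 ^ (H + u) by rewrite leq_pexp2l ?leq_addr.
rewrite /top_class /level_class /dyadic addnS expnS.
have -> : 2 * 2 ^ (H + u) - 2 ^ H = 2 ^ (H + u) - 2 ^ H + 2 ^ (H + u) by lia.
by rewrite iotaD filter_cat; congr (_ ++ filter _ (iota _ _)); lia.
Qed.

Lemma prod_top_class j H u :
  \prod_(a <- top_class j H u) (2 ^ (a %/ 2 ^ H)).+1
  <= 2 ^ top_excess j H u * \prod_(a <- top_class j H u) 2 ^ (a %/ 2 ^ H).
Proof.
elim: u => [|u IHu].
  by rewrite /top_class /top_excess addn0 subnn big_ord0 !big_nil.
rewrite top_classS /top_excess big_ord_recr /= -/(top_excess j H u) expnD !big_cat /=.
rewrite mulnACA leq_mul //.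
set L := level_class j (H + u).
have -> : \prod_(a <- L) (2 ^ (a %/ 2 ^ H)).+1
          = \prod_(x <- map (fun a => 2 ^ (a %/ 2 ^ H)) L) x.+1 by rewrite big_map.
have -> : \prod_(a <- L) 2 ^ (a %/ 2 ^ H)
          = \prod_(x <- map (fun a => 2 ^ (a %/ 2 ^ H)) L) x by rewrite big_map.
rewrite -(size_map (fun a => 2 ^ (a %/ 2 ^ H))).
apply: prod_succ_le_pow2 => x /mapP[a]; rewrite mem_filter mem_iota.
move=> /andP[_ /andP[lt_a _]] ->.
rewrite leq_pexp2l // (leq_trans (ltn_expl u (isT : 1 < 2))) //.
by rewrite leq_divRL ?expn_gt0 // -expnD addnC ltnW.
Qed.

Lemma nsubsums_top_class j H u :
  nsubsums_le (top_class j H u) (2 ^ (H + u)) <= 2 ^ (2 ^ u + top_excess j H u).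
Proof.
set P := \prod_(a <- top_class j H u) 2 ^ (a %/ 2 ^ H).
have P_gt0 : 0 < P by rewrite /P -expn_sum expn_gt0.
have pow_div : 2 ^ (H + u) %/ 2 ^ H = 2 ^ u by rewrite expnD mulKn ?expn_gt0.
rewrite -(leq_pmul2r P_gt0) (leq_trans (rankin_subsums _ _ _)) // pow_div.
by rewrite expnD -mulnA leq_mul2l prod_top_class orbT.
Qed.

End TopClasses.

(** * A colouring defeated by good scales *)

Section Covering.

Variables k q : nat.
Hypotheses (k_gt0 : 0 < k) (q_gt0 : 0 < q).
Hypothesis A_pos : pos_seq A.
Variable top : pred nat.

Definition color_of (a : nat) : nat := if top a then k + rank a %% q else rank a %% k.

Lemma color_of_lt a : color_of a < k + q.
Proof.
rewrite /color_of; case: (top a).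
  by rewrite ltn_add2l ltn_pmod.
exact: leq_trans (ltn_pmod _ k_gt0) (leq_addr _ _).
Qed.

Definition low_sum (L : nat) : nat := sumn (filter A (iota 1 (2 ^ L))).

Lemma low_part_le L s :
  uniq s -> all A s -> sumn (filter (fun a => a <= 2 ^ L) s) <= low_sum L.
Proof.
move=> s_uniq /allP sA; apply: leq_sumn_subset; rewrite ?filter_uniq ?iota_uniq //.
move=> a; rewrite !mem_filter mem_iota => /andP[aL a_s].
by rewrite sA //= add1n ltnS aL A_pos ?sA.
Qed.

Variables L H u : nat.
Hypothesis window_range : forall a, 2 ^ L < a <= 2 ^ H -> ~~ top a.
Hypothesis top_range : forall a, 2 ^ H < a <= 2 ^ (H + u) -> top a.

Definition cover_set (j : nat) : seq nat :=
  flatten [seq iota x (low_sum L).+1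
          | x <- subsums (top_class q j H u) & x <= 2 ^ (H + u)].

Lemma size_cover_set j :
  size (cover_set j) = nsubsums_le (top_class q j H u) (2 ^ (H + u)) * (low_sum L).+1.
Proof.
rewrite /cover_set /nsubsums_le size_flatten /shape -map_comp -size_filter.
by elim: [seq x <- _ | _] => [|x s IHs] //=; rewrite size_iota IHs mulSn.
Qed.

Section Monochromatic.

Variables (c : nat) (s : seq nat).
Hypotheses (s_uniq : uniq s) (s_A : all A s) (s_c : all (fun a => color_of a == c) s).
Hypothesis s_le : sumn s <= 2 ^ (H + u).

Lemma high_part_range a :
  a \in filter (predC (fun a => a <= 2 ^ L)) s -> 2 ^ L < a <= 2 ^ (H + u).
Proof.
rewrite mem_filter /= -ltnNge => /andP[aL a_s].
by rewrite aL (leq_trans (leq_mem_sumn a_s)).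
Qed.

Lemma window_color_sum : c < k ->
  k * sumn s <= k * low_sum L + level_weight H + 4 * k * 2 ^ H.
Proof.
move=> ck; rewrite (sumn_filterC (fun a => a <= 2 ^ L)) mulnDr -addnA.
rewrite leq_add ?leq_mul2l ?low_part_le ?orbT //.
apply: leq_trans (window_class_sum c H k_gt0); rewrite leq_mul2l.
rewrite leq_sumn_subset ?filter_uniq ?iota_uniq ?orbT // => a a_high.
have /andP[aL aHu] := high_part_range a_high.
have a_s : a \in s by move: a_high; rewrite mem_filter => /andP[].
have /eqP a_c := allP s_c a a_s.
have aH : a <= 2 ^ H.
  rewrite leqNgt; apply/negP => Ha; move: a_c.
  by rewrite /color_of top_range ?Ha //; lia.
rewrite mem_filter mem_iota add1n ltnS aH A_pos ?(allP s_A) //= /in_class.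
have a_window : ~~ top a by apply: window_range; rewrite aL aH.
by rewrite (allP s_A) //= andbT -a_c /color_of (negbTE a_window).
Qed.

Lemma top_color_covered : k <= c -> sumn s \in cover_set (c - k).
Proof.
move=> kc; set high := filter (predC (fun a => a <= 2 ^ L)) s.
have high_sub : {subset high <= top_class q (c - k) H u}.
  move=> a a_high; have /andP[aL aHu] := high_part_range a_high.
  have a_s : a \in s by move: a_high; rewrite mem_filter => /andP[].
  have /eqP a_c := allP s_c a a_s.
  have Ha : 2 ^ H < a.
    rewrite ltnNge; apply/negP => aH.
    have a_window : ~~ top a by apply: window_range; rewrite aL aH.
    by move: a_c; rewrite /color_of (negbTE a_window); have := ltn_pmod (rank a) k_gt0; lia.
  have a_top : top a by apply: top_range; rewrite Ha aHu.
  by rewrite mem_top_class Ha aHu /in_class (allP s_A) //= -a_c /color_of a_top addKn.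
have high_in := sumn_subset_subsums (filter_uniq _ s_uniq) (top_class_uniq _ _ _ _) high_sub.
have low_le := low_part_le L s_uniq s_A.
have split_s := sumn_filterC (fun a => a <= 2 ^ L) s; rewrite -/high in split_s.
apply/flattenP; exists (iota (sumn high) (low_sum L).+1).
  by apply/mapP; exists (sumn high); rewrite // mem_filter high_in andbT; lia.
by rewrite mem_iota; lia.
Qed.

End Monochromatic.

(* The window condition rules out window-coloured representations of integers
   above 2^(H+u-1); the cover condition leaves an integer of
   (2^(H+u-1), 2^(H+u)] without top-coloured representation. *)
Definition good_scale : bool :=
  [&& L < H, 0 < u,
      k * low_sum L + level_weight H + 4 * k * 2 ^ H < k * 2 ^ (H + u).-1
    & \sum_(0 <= j < q) nsubsums_le (top_class q j H u) (2 ^ (H + u)) * (low_sum L).+1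
      < 2 ^ (H + u).-1].

Lemma good_scale_unrepresented : good_scale ->
  exists2 m, 2 ^ (H + u).-1 < m & forall c s, c < k + q -> uniq s -> all A s ->
    all (fun a => color_of a == c) s -> sumn s != m.
Proof.
case/and4P => _ u_gt0 window_small cover_small.
set Y := 2 ^ (H + u).-1 in window_small cover_small *.
have pow_Hu : 2 ^ (H + u) = Y + Y.
  by rewrite /Y addnn -mul2n -expnS prednK ?addn_gt0 ?u_gt0 ?orbT.
set C := flatten [seq cover_set j | j <- iota 0 q].
have /hasP[m] : has (predC (mem C)) (iota Y.+1 Y).
  rewrite has_predC; apply/negP => /allP Y_in_C.
  have := uniq_leq_size (iota_uniq Y.+1 Y) Y_in_C; apply/negP; rewrite -ltnNge.
  rewrite size_iota size_flatten /shape -map_comp (leq_ltn_trans _ cover_small) //.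
  rewrite sumnE big_map /index_iota subn0.
  by apply: leq_sum => j _; rewrite /= size_cover_set.
rewrite mem_iota => /andP[Ym mY] m_notin; exists m => // c s cq s_uniq s_A s_c; apply/eqP => s_m.
have s_le : sumn s <= 2 ^ (H + u) by rewrite s_m pow_Hu; lia.
case: (ltnP c k) => [ck|kc].
  have := window_color_sum s_uniq s_A s_c s_le ck; rewrite s_m; apply/negP; rewrite -ltnNge.
  by rewrite (leq_trans window_small) // leq_mul2l (ltnW Ym) orbT.
move: m_notin; apply/negP; rewrite negbK -s_m.
apply/flattenP; exists (cover_set (c - k)); last exact: top_color_covered.
by apply/mapP; exists (c - k); rewrite // mem_iota; lia.
Qed.

End Covering.

Section Scales.

Variables k q : nat.
Hypotheses (k_gt0 : 0 < k) (q_gt0 : 0 < q).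
Hypothesis A_pos : pos_seq A.
Hypothesis good_scale_exists :
  forall L, exists p : nat * nat, good_scale k q L p.1 p.2.

Fixpoint scale (n : nat) : nat * nat :=
  xchoose (good_scale_exists (if n is n'.+1 then (scale n').1 + (scale n').2 else 0)).

Definition scale_low (n : nat) : nat :=
  if n is n'.+1 then (scale n').1 + (scale n').2 else 0.

Definition scale_mid (n : nat) : nat := (scale n).1.

Definition scale_high (n : nat) : nat := (scale n).1 + (scale n).2.

Lemma scale_lowS n : scale_low n.+1 = scale_high n.
Proof. by []. Qed.

Lemma scale_good n : good_scale k q (scale_low n) (scale n).1 (scale n).2.
Proof. by case: n => [|n]; apply: (xchooseP (good_scale_exists _)). Qed.

Lemma scale_low_lt_mid n : scale_low n < scale_mid n.
Proof. by case/andP: (scale_good n). Qed.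

Lemma scale_mid_lt_high n : scale_mid n < scale_high n.
Proof. by case/and3P: (scale_good n) => _ u_gt0 _; rewrite /scale_mid /scale_high; lia. Qed.

Lemma scale_high_le_low n n' : n < n' -> scale_high n <= scale_low n'.
Proof.
elim: n' => [|n' IHn'] //; rewrite scale_lowS ltnS leq_eqVlt => /orP[/eqP-> //|lt_nn'].
by have := IHn' lt_nn'; have := scale_low_lt_mid n'; have := scale_mid_lt_high n'; lia.
Qed.

Lemma leq_scale_mid n : n <= scale_mid n.
Proof.
elim: n => [|n IHn] //; have := scale_low_lt_mid n.+1; have := scale_mid_lt_high n.
by rewrite scale_lowS; lia.
Qed.

Definition is_top (a : nat) : bool :=
  has (fun n => 2 ^ scale_mid n < a <= 2 ^ scale_high n) (iota 0 a).

Lemma is_top_high n a : 2 ^ scale_mid n < a <= 2 ^ scale_high n -> is_top a.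
Proof.
move=> an; apply/hasP; exists n => //; rewrite mem_iota /=.
by have := leq_scale_mid n; have := ltn_expl (scale_mid n) (isT : 1 < 2); lia.
Qed.

Lemma window_not_top n a : 2 ^ scale_low n < a <= 2 ^ scale_mid n -> ~~ is_top a.
Proof.
move=> an; apply/hasP => -[n' _ an'].
have exp_mono m m' : m <= m' -> 2 ^ m <= 2 ^ m' by move=> ?; rewrite leq_pexp2l.
case: (ltngtP n' n) => [lt_n'n|lt_nn'|eq_n'n].
- by have := exp_mono _ _ (scale_high_le_low lt_n'n); lia.
- have := exp_mono _ _ (leq_trans (ltnW (scale_mid_lt_high n)) (scale_high_le_low lt_nn')).
  by have := exp_mono _ _ (ltnW (scale_low_lt_mid n')); lia.
- by rewrite eq_n'n in an'; lia.
Qed.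

Lemma not_ramsey_complete_of_scales : ~ ramsey_complete (k + q) A.
Proof.
pose color a : 'I_(k + q) := Ordinal (color_of_lt k_gt0 q_gt0 is_top a).
move=> /(_ color) [N HN].
have [m Ym unrepresented] := good_scale_unrepresented k_gt0 q_gt0 A_pos
  (window_not_top (n := N)) (is_top_high (n := N)) (scale_good N).
have N_lt : N < 2 ^ (scale_high N).-1.
  apply: leq_ltn_trans (ltn_expl _ (isT : 1 < 2)).
  by have := leq_scale_mid N; have := scale_mid_lt_high N; lia.
have [i [s [s_uniq /allP s_class s_m]]] := HN m (ltnW (ltn_trans N_lt Ym)).
have s_A : all A s by apply/allP => a /s_class /andP[].
have s_i : all (fun a => color_of k q is_top a == i) s.
  by apply/allP => a /s_class /andP[_ /eqP <-].
by have := unrepresented i s (ltn_ord i) s_uniq s_A s_i; rewrite s_m eqxx.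
Qed.

End Scales.

End Classes.

(** * Averaging the density bound *)

Section Averages.

Variable A : pred nat.
Variable F : realFieldType.
Local Open Scope ring_scope.

Lemma sumr_nat_suffix_le (G : nat -> F) m n : (forall i, 0 <= G i) ->
  \sum_(m <= i < n) G i <= \sum_(0 <= i < n) G i.
Proof.
move=> G_ge0; case: (leqP m n) => [le_mn|lt_nm].
  by rewrite (big_cat_nat (leq0n m) le_mn) /= lerDr sumr_ge0.
by rewrite big_geq ?(ltnW lt_nm) // sumr_ge0.
Qed.

Lemma sum_natr_B_4B B :
  (\sum_(B <= H < (4 * B).+1) H%:R) * 2 = 15 * B%:R ^+ 2 + 5 * B%:R :> F.
Proof.
have := sum_nat_range_double B (3 * B).+1.
rewrite (_ : (B + (3 * B).+1 = (4 * B).+1)%N); last lia.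
move=> e; have {}e : ((\sum_(B <= H < (4 * B).+1) H) * 2 = 15 * B * B + 5 * B)%N by nia.
by rewrite -natr_sum -natrM e natrD !natrM; ring.
Qed.

(* [low_avg H] bounds the sum of the terms up to 2^H, divided by 2^H, and
   [high_avg N H] = sum over H < l <= N of |level l| 2^(H+1-l) controls
   [top_excess]. *)
Definition low_avg (H : nat) : F := (level_weight A H)%:R / 2 ^+ H.

Definition high_avg (N H : nat) : F :=
  \sum_(t < N - H) (level_size A (H + t).+1)%:R / 2 ^+ t.

Lemma pow2_gt0 n : 0 < 2 ^+ n :> F.
Proof. by rewrite exprn_gt0. Qed.

Lemma low_avg_ge0 H : 0 <= low_avg H.
Proof. by rewrite divr_ge0 ?ler0n ?(ltW (pow2_gt0 _)). Qed.

Lemma high_avg_ge0 N H : 0 <= high_avg N H.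
Proof. by rewrite sumr_ge0 // => t _; rewrite divr_ge0 ?ler0n ?(ltW (pow2_gt0 _)). Qed.

Lemma low_avgS H : low_avg H.+1 = low_avg H / 2 + (level_size A H.+1)%:R.
Proof.
rewrite /low_avg /level_weight big_ord_recr /= natrD natrM natrX exprS.
by field; rewrite gt_eqF ?pow2_gt0.
Qed.

Lemma high_avgS N H : (H < N)%N ->
  high_avg N H = (level_size A H.+1)%:R + high_avg N H.+1 / 2.
Proof.
move=> lt_HN; rewrite /high_avg -(subnSK lt_HN) big_ord_recl /= addn0 expr0 divr1.
rewrite mulr_suml; congr (_ + _); apply: eq_bigr => t _.
by rewrite /bump /= add1n addnS addSn exprS; field; rewrite gt_eqF ?pow2_gt0.
Qed.

Lemma sum_low_avg n :
  \sum_(0 <= H < n.+1) low_avg H + low_avg n <= 2 * (counting A (2 ^ n))%:R.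
Proof.
elim: n => [|n IHn].
  by rewrite big_nat1 /low_avg /level_weight big_ord1 /= expr0 !divr1 muln1; lra.
by rewrite big_nat_recr //= low_avgS counting_pow2S natrD; lra.
Qed.

Lemma sum_high_avg_from N k : (k <= N)%N ->
  \sum_(N - k <= H < N.+1) high_avg N H + high_avg N (N - k)
  <= 2 * ((counting A (2 ^ N))%:R - (counting A (2 ^ (N - k)))%:R).
Proof.
elim: k => [|k IHk] le_kN.
  by rewrite subn0 big_nat1 /high_avg subnn big_ord0; lra.
have eq_Nk : (N - k = (N - k.+1).+1)%N by lia.
rewrite big_ltn ?ltnS ?leq_subr // -eq_Nk (high_avgS (_ : (N - k.+1 < N)%N)); last lia.
have := IHk (ltnW le_kN); rewrite eq_Nk counting_pow2S natrD -eq_Nk.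
by have := high_avg_ge0 N (N - k); lra.
Qed.

Lemma sum_high_avg N :
  \sum_(0 <= H < N.+1) high_avg N H <= 2 * (counting A (2 ^ N))%:R.
Proof.
have := sum_high_avg_from (leqnn N); rewrite subnn.
by have := high_avg_ge0 N 0; have : 0 <= (counting A (2 ^ 0))%:R :> F by []; lra.
Qed.

Lemma sum_low_avg_le m n :
  \sum_(m <= H < n.+1) low_avg H <= 2 * (counting A (2 ^ n))%:R.
Proof.
rewrite (le_trans (sumr_nat_suffix_le _ _ low_avg_ge0)) //.
by have := sum_low_avg n; have := low_avg_ge0 n; lra.
Qed.

Lemma sum_high_avg_le m n N : (n <= N)%N ->
  \sum_(m <= H < n.+1) high_avg N H <= 2 * (counting A (2 ^ N))%:R.
Proof.
move=> le_nN; rewrite (le_trans (sumr_nat_suffix_le _ _ (high_avg_ge0 N))) //.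
rewrite (le_trans _ (sum_high_avg N)) // (big_cat_nat (leq0n _) (_ : n.+1 <= N.+1)%N) //=.
by rewrite lerDl sumr_ge0 // => H _; exact: high_avg_ge0.
Qed.

End Averages.

Section Markov.

Variables (A : pred nat) (F : realFieldType) (c : F) (x0 : nat).
Local Open Scope ring_scope.
Hypothesis c_gt0 : 0 < c.
Hypothesis density :
  forall x, (x0 <= x)%N -> (counting A (2 ^ x))%:R <= c * x%:R ^+ 2.

(* Otherwise c * sum_{B <= H <= 4B} H < sum (low_avg H / 9 + high_avg H / 20)
   <= (32/9 + 18/5) c B^2, whereas the left-hand side is at least 15/2 c B^2. *)
Lemma exists_regular_level B : (x0 <= B)%N -> (0 < B)%N ->
  exists H, [/\ (B <= H <= 4 * B)%N, low_avg A F H <= 9 * c * H%:R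
              & high_avg A F (6 * B) H <= 20 * c * H%:R].
Proof.
move=> x0B B_gt0.
set P := fun H => (low_avg A F H <= 9 * c * H%:R) && (high_avg A F (6 * B) H <= 20 * c * H%:R).
suff /hasP[H] : has P (index_iota B (4 * B).+1).
  by rewrite mem_index_iota => range /andP[? ?]; exists H; split.
apply/negPn/negP => /hasPn noP.
have lt_sum : \sum_(B <= H < (4 * B).+1) c * H%:R
    < \sum_(B <= H < (4 * B).+1) (low_avg A F H / 9 + high_avg A F (6 * B) H / 20).
  apply: ltr_sum_nat => [|H range]; first lia.
  have := noP H; rewrite mem_index_iota range => /(_ isT).
  rewrite negb_and -!ltNge => /orP[];
    have := low_avg_ge0 A F H; have := high_avg_ge0 A F (6 * B) H; lra.
rewrite big_split /= -!mulr_suml -mulr_sumr in lt_sum.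
have := sum_low_avg_le A F B (4 * B).
have le_4B_6B : (4 * B <= 6 * B)%N by lia.
have := sum_high_avg_le A F B le_4B_6B.
have density_at m : (0 < m)%N ->
    (counting A (2 ^ (m * B)))%:R <= m%:R ^+ 2 * (c * B%:R ^+ 2).
  move=> m_gt0; rewrite (le_trans (density _)) ?(leq_trans x0B) ?leq_pmull //.
  by rewrite natrM exprMn mulrCA.
have := density_at 4 isT; have := density_at 6 isT.
have cS : (c * \sum_(B <= H < (4 * B).+1) H%:R) * 2 = 15 * (c * B%:R ^+ 2) + 5 * (c * B%:R).
  by rewrite -mulrA sum_natr_B_4B; ring.
have := mulr_ge0 (ltW c_gt0) (exprn_ge0 2 (ler0n F B)).
have := mulr_ge0 (ltW c_gt0) (ler0n F B).
lra.
Qed.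

End Markov.

(** * Existence of good scales *)

Lemma exists_pow2_bracket K S M : 0 < K -> K * 2 ^ M <= S ->
  exists v, K * 2 ^ (M + v) <= S < K * 2 ^ (M + v).+1.
Proof.
move=> K_gt0 KM_le.
have ex_v : exists v, S < K * 2 ^ (M + v).+1.
  exists S; rewrite (leq_trans (ltn_expl S (isT : 1 < 2))) // -[2 ^ S]mul1n.
  by rewrite leq_mul // leq_pexp2l // ltnW // ltnS leq_addl.
case: (ex_minnP ex_v) => v lt_v min_v; exists v; rewrite lt_v andbT.
case: v lt_v min_v => [|v] _ min_v; first by rewrite addn0.
by rewrite addnS leqNgt; apply/negP => /min_v; rewrite ltnn.
Qed.

Section CoverBound.

Variables (A : pred nat) (q : nat).

Lemma low_sum_le L : low_sum A L <= 2 ^ (2 * L).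
Proof.
have le_pow : all (fun a => a <= 2 ^ L) (iota 1 (2 ^ L)).
  by apply/allP => a; rewrite mem_iota; lia.
rewrite mul2n -addnn expnD (leq_trans (leq_sumn_filter_count A le_pow)) //.
by rewrite leq_mul2r (leq_trans (count_size _ _)) ?size_iota ?orbT.
Qed.

Lemma cover_sum_lt L H u :
  q + 2 * L + 3 <= H + u ->
  (forall j, 2 ^ u + top_excess A q j H u <= H + u - (q + 2 * L + 3)) ->
  \sum_(0 <= j < q) nsubsums_le (top_class A q j H u) (2 ^ (H + u)) * (low_sum A L).+1
  < 2 ^ (H + u).-1.
Proof.
move=> le_Hu excess_le; set E := H + u - (q + 2 * L + 3).
have term_le j : nsubsums_le (top_class A q j H u) (2 ^ (H + u)) * (low_sum A L).+1
                 <= 2 ^ E * 2 ^ (2 * L).+1.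
  rewrite leq_mul ?(leq_trans (nsubsums_top_class _ _ _ _ _)) ?leq_pexp2l //.
  by have := low_sum_le L; rewrite expnS; have := expn_gt0 2 (2 * L); lia.
rewrite (leq_ltn_trans (leq_sum _ (fun j _ => term_le j))) // sum_nat_const_nat subn0.
rewrite -expnD (leq_trans (_ : _ < 2 ^ q * 2 ^ (E + (2 * L).+1))) //.
  by rewrite ltn_pmul2r ?expn_gt0 // ltn_expl.
by rewrite -expnD leq_pexp2l //; lia.
Qed.

End CoverBound.

Section ScaleEstimates.

Variables (A : pred nat) (F : realFieldType).
Local Open Scope ring_scope.

Lemma natr_divn_le (a b : nat) : (0 < b)%N -> (a %/ b)%:R <= a%:R / b%:R :> F.
Proof. by move=> b_gt0; rewrite ler_pdivlMr ?ltr0n // -natrM ler_nat leq_divM. Qed.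

Lemma sum_inv_pow2_le u : \sum_(t < u) (2 ^+ t)^-1 <= 2 :> F.
Proof.
suff -> : \sum_(t < u) (2 ^+ t)^-1 = 2 - 2 / 2 ^+ u :> F.
  by rewrite lerBlDr lerDl divr_ge0 ?(ltW (pow2_gt0 _ _)).
elim: u => [|u IHu]; first by rewrite big_ord0 expr0 divr1 subrr.
by rewrite big_ord_recr /= IHu exprS; field; rewrite gt_eqF ?pow2_gt0.
Qed.

Lemma sumr_ord_prefix_le (G : nat -> F) u n : (u <= n)%N -> (forall t, 0 <= G t) ->
  \sum_(t < u) G t <= \sum_(t < n) G t.
Proof.
by move=> le_un G_ge0; rewrite -(subnKC le_un) big_split_ord /= lerDl sumr_ge0.
Qed.

Lemma top_excess_le q j H u N : (0 < q)%N -> (H + u <= N)%N ->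
  (top_excess A q j H u)%:R <= high_avg A F N H / q%:R + 4 + u%:R.
Proof.
move=> q_gt0 le_HuN; have q_gt0' : 0 < q%:R :> F by rewrite ltr0n.
have term_le (t : 'I_u) :
    ((size (level_class A q j (H + t)) %/ 2 ^ t + 1)%:R : F)
    <= (level_size A (H + t).+1)%:R / 2 ^+ t / q%:R + 2 * (2 ^+ t)^-1 + 1.
  rewrite natrD lerD2r (le_trans (natr_divn_le _ _)) ?expn_gt0 // natrX.
  rewrite -mulrA [_ / q%:R]mulrC mulrA -mulrDl.
  rewrite ler_wpM2r ?invr_ge0 ?(ltW (pow2_gt0 _ _)) //.
  have := size_level_class A j (H + t) q_gt0; rewrite -(ler_nat F) natrD !natrM => size_le.
  by rewrite -(ler_pM2l q_gt0') mulrDr mulrCA divff ?gt_eqF // mulr1; lra.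
rewrite /top_excess natr_sum (le_trans (ler_sum _ (fun t _ => term_le t))) //.
rewrite !big_split /= -mulr_suml -mulr_sumr sumr_const card_ord -[1 *+ u]/(u%:R).
have le_prefix : \sum_(t < u) (level_size A (H + t).+1)%:R / 2 ^+ t <= high_avg A F N H.
  rewrite /high_avg.
  apply: (sumr_ord_prefix_le (G := fun t => (level_size A (H + t).+1)%:R / 2 ^+ t)) => [|t].
    by rewrite leq_subRL ?(leq_trans (leq_addr u H)).
  by rewrite divr_ge0 ?ler0n ?(ltW (pow2_gt0 _ _)).
have := sum_inv_pow2_le u.
have q_inv_ge0 : 0 <= q%:R^-1 :> F by rewrite invr_ge0 ler0n.
have := ler_wpM2r q_inv_ge0 le_prefix.
lra.
Qed.

Lemma pow2_length_le k c L H v : (0 < k)%N -> (2 * L <= H)%N ->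
  70 * c <= k%:R -> low_avg A F H <= 9 * c * H%:R ->
  (k * 2 ^ (H + v) <= k * low_sum A L + level_weight A H + 4 * k * 2 ^ H)%N ->
  (2 ^ v)%:R <= 5 + 9 / 70 * H%:R :> F.
Proof.
move=> k_gt0 le_LH le_ck low_le le_len.
set X : F := (k * 2 ^ H)%:R.
have X_gt0 : 0 < X by rewrite ltr0n muln_gt0 k_gt0 expn_gt0.
have low_sum_X : (k * low_sum A L)%:R <= X.
  rewrite ler_nat leq_mul2l (leq_trans (low_sum_le A L)) ?leq_pexp2l ?orbT //.
have weight_X : (level_weight A H)%:R <= 9 / 70 * H%:R * X.
  have -> : (level_weight A H)%:R = low_avg A F H * 2 ^+ H by rewrite divfK ?gt_eqF ?pow2_gt0.
  rewrite (le_trans (ler_wpM2r (ltW (pow2_gt0 F H)) low_le)) // /X natrM natrX.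
  have := mulr_ge0 (ler0n F H) (ltW (pow2_gt0 F H)).
  by nra.
rewrite -(ler_pM2r X_gt0); move: le_len; rewrite -(ler_nat F) !natrD.
rewrite (_ : (k * 2 ^ (H + v))%:R = (2 ^ v)%:R * X); last by rewrite /X expnD !natrM; ring.
by rewrite (_ : (4 * k * 2 ^ H)%:R = 4 * X); [lra | rewrite /X !natrM; ring].
Qed.

End ScaleEstimates.

Lemma top_length_le B v : 3 <= B -> 2 ^ v <= 4 * B + 5 -> v.+2 <= 2 * B.
Proof.
move=> B_ge3 le_pow; rewrite leqNgt; apply/negP => lt_Bv.
have pow_big n : 4 * (n + 3) + 5 < 2 ^ (2 * (n + 3)).-1.
  elim: n => [|n IHn] //; rewrite (_ : (2 * (n.+1 + 3)).-1 = ((2 * (n + 3)).-1).+2); last lia.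
  by rewrite !expnS; lia.
have := pow_big (B - 3); rewrite subnK //.
have : 2 ^ (2 * B).-1 <= 2 ^ v by rewrite leq_pexp2l //; lia.
lia.
Qed.

Section GoodScale.

Variables (A : pred nat) (F : realFieldType) (k q x0 : nat) (c : F).
Local Open Scope ring_scope.
Hypotheses (k_gt0 : (0 < k)%N) (q_gt0 : (0 < q)%N) (c_gt0 : 0 < c).
Hypotheses (c_le_k : 70 * c <= k%:R) (c_le_q : 70 * c <= q%:R).
Hypothesis density :
  forall x, (x0 <= x)%N -> (counting A (2 ^ x))%:R <= c * x%:R ^+ 2.

(* u is the least length satisfying the window condition; its minimality
   bounds 2^u by O(H / k), while [exists_regular_level] bounds the excess of
   every top class by O(H / q) + u. *)
Lemma exists_good_scale L : exists p : nat * nat, good_scale A k q L p.1 p.2.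
Proof.
set B := (x0 + 5 * (q + 2 * L + 27)).+1.
have x0_le_B : (x0 <= B)%N by rewrite /B; lia.
have [H [/andP[BH H4B] low_le high_le]] :=
  exists_regular_level c_gt0 density x0_le_B (ltn0Sn _).
set S := (k * low_sum A L + level_weight A H + 4 * k * 2 ^ H)%N.
have kH_le_S : (k * 2 ^ H <= S)%N by rewrite /S; nia.
have [v /andP[Sv vS]] := exists_pow2_bracket k_gt0 kH_le_S.
exists (H, v.+2); apply/and4P; split => //=; first by rewrite /B in BH; lia.
  by rewrite addnS /= addnS.
have LH : (2 * L <= H)%N by rewrite /B in BH; lia.
have len_le := pow2_length_le k_gt0 LH c_le_k low_le Sv.
have v_le : (v.+2 <= 2 * B)%N.
  apply: top_length_le; first by rewrite /B; lia.
  rewrite -(ler_nat F) natrD natrM (le_trans len_le) //.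
  have := ler0n F H; have : (H <= 4 * B)%N := H4B; rewrite -(ler_nat F) natrM; lra.
have H_big : (5 * (q + 2 * L + 27) <= H)%N by rewrite /B in BH; lia.
apply: cover_sum_lt => [|j]; first lia.
have le_6B : (H + v.+2 <= 6 * B)%N by lia.
have := top_excess_le A F j q_gt0 le_6B.
have high_q : high_avg A F (6 * B) H / q%:R <= 2 / 7 * H%:R.
  rewrite ler_pdivrMr ?ltr0n //; have := ler_wpM2r (ler0n F H) c_le_q; lra.
move: H_big; rewrite -(ler_nat F) natrM !natrD => H_big excess_le.
rewrite -(ler_nat F) natrB; last lia.
rewrite !expnS !natrD; lra.
Qed.

End GoodScale.

Section NatDensity.

Local Open Scope ring_scope.

Lemma exists_good_scale_nat (A : pred nat) k q x0 m :
  (0 < k)%N -> (0 < q)%N -> (0 < m)%N -> (m <= 2 * k)%N -> (m <= 2 * q)%N ->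
  (forall x, (x0 <= x)%N -> (140 * counting A (2 ^ x) <= m * x ^ 2)%N) ->
  forall L, exists p : nat * nat, good_scale A k q L p.1 p.2.
Proof.
move=> k_gt0 q_gt0 m_gt0 m_le_k m_le_q density.
pose c : rat := m%:R / 140.
have c_gt0 : 0 < c by rewrite divr_gt0 // ltr0n.
have c_le n : (m <= 2 * n)%N -> 70 * c <= n%:R by rewrite -(ler_nat rat) natrM /c; lra.
have density_c x : (x0 <= x)%N -> (counting A (2 ^ x))%:R <= c * x%:R ^+ 2.
  by move/density; rewrite -(ler_nat rat) !natrM /c; lra.
exact: exists_good_scale k_gt0 q_gt0 c_gt0 (c_le k m_le_k) (c_le q m_le_q) density_c.
Qed.

End NatDensity.

Lemma INR_expn2 n : INR (2 ^ n) = (2 ^ n)%R.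
Proof. by elim: n => [|n IHn] //; rewrite expnS mult_INR IHn. Qed.

Lemma log2_expn2 n : log2 (INR (2 ^ n)) = INR n.
Proof.
have ln2_gt0 : (0 < ln 2)%R by rewrite -ln_1; apply: ln_increasing; Lra.lra.
by rewrite /log2 INR_expn2 ln_pow ?Rmult_div_l //; [apply: Rgt_not_eq | Lra.lra].
Qed.

Lemma density_of_log2_bound r A N : 0 < r ->
  (forall n, N <= n ->
     (INR (counting A n) <= (INR r - 1) / 140 * log2 (INR n) ^ 2)%R) ->
  forall x, N <= x -> 140 * counting A (2 ^ x) <= r.-1 * x ^ 2.
Proof.
move=> r_gt0 bound x Nx.
have := bound (2 ^ x) (leq_trans Nx (ltnW (ltn_expl x (isT : 1 < 2)))).
rewrite log2_expn2 => le_count; apply/ssrnat.leP/INR_le.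
rewrite -mulnn -subn1 !mult_INR minus_INR; last exact/ssrnat.leP.
by move: le_count; rewrite /= Rmult_1_r; Lra.lra.
Qed.

Theorem theorem3p5 (r : nat) (A : pred nat) :
  2 <= r ->
  pos_seq A ->
  (exists N : nat, forall n : nat, N <= n ->
     (INR (counting A n) <= (INR r - 1) / 140 * (log2 (INR n)) ^ 2)%R) ->
  ~ ramsey_complete r A.
Proof.
move=> r_ge2 A_pos [N bound].
have density := density_of_log2_bound (ltnW r_ge2) bound.
have k_gt0 : 0 < r %/ 2 by lia.
have q_gt0 : 0 < r - r %/ 2 by lia.
rewrite (_ : r = r %/ 2 + (r - r %/ 2)); last lia.
apply: (not_ramsey_complete_of_scales k_gt0 q_gt0 A_pos).
by apply: (exists_good_scale_nat k_gt0 q_gt0 _ _ _ density); lia.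
Qed.
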